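(* In any generalised differential Seely category (as defined in the context), the symmetric monoidal category $\mathcal L$, equipped with the comonad $!=\mathcal F\mathcal U$, is a differential Seely category.
   Context: Composition is diagrammatic ($f;g$ = $f$ then $g$); monoidal categories are strict. An LNL adjunction is a symmetric monoidal adjunction $\mathcal F\dashv\mathcal U$, $\mathcal F:\mathscr C\to\mathcal L$, between a cartesian category $(\mathscr C,\times,I)$ and a symmetric monoidal category $(\mathcal L,\otimes,1)$ (symmetry $\sigma$), with $\mathcal U$ lax monoidal via $n_{A,B}:\mathcal U(A)\times\mathcal U(B)\to\mathcal U(A\otimes B)$, $\mathcal F$ strong monoidal via isomorphisms $m_{X,Y}:\mathcal F(X)\otimes\mathcal F(Y)\to\mathcal F(X\times Y)$, $m_1:1\to\mathcal F(I)$; unit $\eta$, counit $\mathbf d$, comonad $!=\mathcal F\mathcal U$ with comultiplication $\mathbf p$. $\mathbf c_X:=\mathcal F(\Delta_X);m_{X,X}^{-1}$, $\mathbf w_X:=\mathcal F(t_X);m_1^{-1}$ ($t_X:X\to I$ terminal), $\mathbf c_A:=\mathbf c_{\mathcal U(A)}$, $\mathbf w_A:=\mathbf w_{\mathcal U(A)}$. $LS(\mathscr C)$: objects $(X,A)$, $X\in\mathscr C,A\in\mathcal L$; morphisms $(f,u):(X,A)\to(Y,B)$ with $f:X\to Y$, $u:\mathcal F(X)\otimes A\to B$; composition $(f,u);(g,v)=(f;g,(\mathbf c_X\otimes\mathrm{id}_A);(\mathcal F(f)\otimes u);v)$, identity $(\mathrm{id}_X,\mathbf w_X\otimes\mathrm{id}_A)$;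 $\mathbf{ls}(X,A)=X$, $\mathbf{ls}(f,u)=f$. GDSC: an LNL adjunction with $\mathcal L$ additive (enriched over commutative monoids, $\otimes$ bilinear in each argument and preserving $0$) and having finite products (hence biproducts $\oplus$, injections $\iota_i$), with a functor $\mathcal T:\mathscr C\to LS(\mathscr C)$ such that: (t.1) $\mathbf{ls}\circ\mathcal T=\mathrm{id}$ (so $\mathcal T(X)=(X,\lambda(X))$), and $\varphi_{X,Y}:=\langle\mathcal T(\pi_1),\mathcal T(\pi_2)\rangle:\mathcal T(X\times Y)\to(X\times Y,\lambda(X)\oplus\lambda(Y))$ is an isomorphism, where $LS(\mathscr C)$ has products $(X,A)\times(Y,B)=(X\times Y,A\oplus B)$ with projections $(\pi_i,\mathbf w_{X\times Y}\otimes\pi_i)$; (t.2) $\mathcal T(\mathcal U(A))=(\mathcal U(A),A)$; (t.3) with $i^{X,Y}_2:=(\mathrm{id}_{X\times Y},\mathbf w_{X\times Y}\otimes\iota_2);\varphi_{X,Y}^{-1}:(X\times Y,\lambda(Y))\to\mathcal T(X\times Y)$, $⦃(f,u)⦄:=\langle\pi_1;f,(\eta_X\times\mathrm{id}_{\mathcal U(A)});n_{\mathcal F(X),A};\mathcal U(u)\rangle:X\times\mathcal U(A)\to Y\times\mathcal U(B)$ and $W(f,u):=(⦃(f,u)⦄,(\mathcal F(\pi_1)\otimes\mathrm{id}_A);u):(X\times\mathcal U(A),A)\to(Y\times\mathcal U(B),B)$, one has $W(f,u);i^{Y,\mathcal U(B)}_2=i^{X,\mathcal U(A)}_2;\mathcal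 T(⦃(f,u)⦄)$ for all $(f,u):(X,A)\to(Y,B)$. Differential Seely category: an additive symmetric monoidal category with finite (bi)products and a comonad $(!,\mathbf d,\mathbf p)$ with Seely isomorphisms $!(A\oplus B)\cong!A\otimes!B$, $!0\cong1$ (giving comonoids $\mathbf c_A,\mathbf w_A$), plus a natural $\partial_A:!A\otimes A\to!A$ satisfying: $\partial_A;\mathbf w_A=0$; $\partial_A;\mathbf c_A=(\mathbf c_A\otimes\mathrm{id}_A);[(\mathrm{id}_{!A}\otimes\partial_A)+(\mathrm{id}_{!A}\otimes\sigma_{!A,A};\partial_A\otimes\mathrm{id}_{!A})]$; $\partial_A;\mathbf d_A=\mathbf w_A\otimes\mathrm{id}_A$; $\partial_A;\mathbf p_A=(\mathbf c_A\otimes\mathrm{id}_A);(\mathbf p_A\otimes\partial_A);\partial_{!A}$; $(\mathrm{id}_{!A}\otimes\sigma_{A,A});(\partial_A\otimes\mathrm{id}_A);\partial_A=(\partial_A\otimes\mathrm{id}_A);\partial_A$. *)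

Set Implicit Arguments.
Unset Strict Implicit.

Record Cat := {
  ob :> Type;
  hom : ob -> ob -> Type;
  comp : forall A B D : ob, hom A B -> hom B D -> hom A D;
  idm : forall A : ob, hom A A;
  comp_idl : forall (A B : ob) (f : hom A B), comp (idm A) f = f;
  comp_idr : forall (A B : ob) (f : hom A B), comp f (idm B) = f;
  comp_assoc : forall (A B D E : ob) (f : hom A B) (g : hom B D) (h : hom D E),
      comp (comp f g) h = comp f (comp g h) }.
Arguments hom {c} A B : rename.
Arguments comp {c A B D} f g : rename.
Arguments idm {c} A : rename.
Notation "f >> g" := (comp f g) (at level 40, left associativity).

Record Cartesian (K : Cat) := {
  term : K;
  bang : forall X : K, hom X term;
  bang_uniq : forall (X : K) (f : hom X term), f = bang X;
  prod : K -> K -> K;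
  pr1 : forall X Y : K, hom (prod X Y) X;
  pr2 : forall X Y : K, hom (prod X Y) Y;
  pair : forall Z X Y : K, hom Z X -> hom Z Y -> hom Z (prod X Y);
  pair_pr1 : forall (Z X Y : K) (f : hom Z X) (g : hom Z Y), pair f g >> pr1 X Y = f;
  pair_pr2 : forall (Z X Y : K) (f : hom Z X) (g : hom Z Y), pair f g >> pr2 X Y = g;
  pair_uniq : forall (Z X Y : K) (h : hom Z (prod X Y)),
      h = pair (h >> pr1 X Y) (h >> pr2 X Y) }.
Arguments term {K} c : rename.
Arguments bang {K} c X : rename.
Arguments prod {K} c X Y : rename.
Arguments pr1 {K} c X Y : rename.
Arguments pr2 {K} c X Y : rename.
Arguments pair {K} c {Z X Y} f g : rename.

Definition prodm (K : Cat) (P : Cartesian K) (X Y X' Y' : K) (f : hom X X') (g : hom Y Y')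
  : hom (prod P X Y) (prod P X' Y') := pair P (pr1 P X Y >> f) (pr2 P X Y >> g).
Arguments prodm {K} P {X Y X' Y'} f g : rename.
Definition assocC (K : Cat) (P : Cartesian K) (X Y Z : K)
  : hom (prod P (prod P X Y) Z) (prod P X (prod P Y Z)) :=
  pair P (pr1 P _ Z >> pr1 P X Y) (pair P (pr1 P _ Z >> pr2 P X Y) (pr2 P _ Z)).
Arguments assocC {K} P X Y Z : rename.
Definition swapC (K : Cat) (P : Cartesian K) (X Y : K) : hom (prod P X Y) (prod P Y X) :=
  pair P (pr2 P X Y) (pr1 P X Y).
Arguments swapC {K} P X Y : rename.
Definition diagC (K : Cat) (P : Cartesian K) (X : K) : hom X (prod P X X) :=
  pair P (idm X) (idm X).
Arguments diagC {K} P X : rename.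

Record SMC (K : Cat) := {
  tens : K -> K -> K;
  tensm : forall A B A' B' : K, hom A A' -> hom B B' -> hom (tens A B) (tens A' B');
  unit : K;
  asc : forall A B D : K, hom (tens (tens A B) D) (tens A (tens B D));
  asci : forall A B D : K, hom (tens A (tens B D)) (tens (tens A B) D);
  lu : forall A : K, hom (tens unit A) A;
  lui : forall A : K, hom A (tens unit A);
  ru : forall A : K, hom (tens A unit) A;
  rui : forall A : K, hom A (tens A unit);
  sym : forall A B : K, hom (tens A B) (tens B A);
  tensm_id : forall A B : K, tensm (idm A) (idm B) = idm (tens A B);
  tensm_comp : forall (A B D A' B' D' : K) (f : hom A B) (g : hom B D) (f' : hom A' B') (g' : hom B' D'),
      tensm (f >> g) (f' >> g') = tensm f f' >> tensm g g';
  asc_iso1 : forall A B D : K, asc A B D >> asci A B D = idm _;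
  asc_iso2 : forall A B D : K, asci A B D >> asc A B D = idm _;
  asc_nat : forall (A B D A' B' D' : K) (f : hom A A') (g : hom B B') (h : hom D D'),
      tensm (tensm f g) h >> asc A' B' D'
      = asc A B D >> tensm f (tensm g h);
  lu_iso1 : forall A : K, lu A >> lui A = idm _;
  lu_iso2 : forall A : K, lui A >> lu A = idm _;
  lu_nat : forall (A B : K) (f : hom A B), tensm (idm unit) f >> lu B = lu A >> f;
  ru_iso1 : forall A : K, ru A >> rui A = idm _;
  ru_iso2 : forall A : K, rui A >> ru A = idm _;
  ru_nat : forall (A B : K) (f : hom A B), tensm f (idm unit) >> ru B = ru A >> f;
  sym_nat : forall (A B A' B' : K) (f : hom A A') (g : hom B B'),
      tensm f g >> sym A' B' = sym A B >> tensm g f;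
  sym_inv : forall A B : K, sym A B >> sym B A = idm _;
  pentagon : forall A B D E : K,
      asc (tens A B) D E >> asc A B (tens D E)
      = tensm (asc A B D) (idm E) >> asc A (tens B D) E >> tensm (idm A) (asc B D E);
  triangle : forall A B : K,
      asc A unit B >> tensm (idm A) (lu B) = tensm (ru A) (idm B);
  hexagon : forall A B D : K,
      asc A B D >> sym A (tens B D) >> asc B D A
      = tensm (sym A B) (idm D) >> asc B A D >> tensm (idm B) (sym A D) }.
Arguments tens {K} c A B : rename.
Arguments tensm {K} c {A B A' B'} f g : rename.
Arguments unit {K} c : rename.
Arguments asc {K} c A B D : rename.
Arguments asci {K} c A B D : rename.
Arguments lu {K} c A : rename.
Arguments ru {K} c A : rename.
Arguments sym {K} c A B : rename.

Record Additive (K : Cat) (M : SMC K) := {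
  zero : forall A B : K, hom A B;
  add : forall A B : K, hom A B -> hom A B -> hom A B;
  add_assoc : forall (A B : K) (f g h : hom A B), add (add f g) h = add f (add g h);
  add_comm : forall (A B : K) (f g : hom A B), add f g = add g f;
  add_0l : forall (A B : K) (f : hom A B), add (zero A B) f = f;
  comp_0l : forall (A B D : K) (g : hom B D), zero A B >> g = zero A D;
  comp_0r : forall (A B D : K) (f : hom A B), f >> zero B D = zero A D;
  comp_addl : forall (A B D : K) (f f' : hom A B) (g : hom B D),
      add f f' >> g = add (f >> g) (f' >> g);
  comp_addr : forall (A B D : K) (f : hom A B) (g g' : hom B D),
      f >> add g g' = add (f >> g) (f >> g');
  tens_0l : forall (A A' B B' : K) (g : hom B B'),
      tensm M (zero A A') g = zero (tens M A B) (tens M A' B');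
  tens_0r : forall (A A' B B' : K) (f : hom A A'),
      tensm M f (zero B B') = zero (tens M A B) (tens M A' B');
  tens_addl : forall (A A' B B' : K) (f f' : hom A A') (g : hom B B'),
      tensm M (add f f') g = add (tensm M f g) (tensm M f' g);
  tens_addr : forall (A A' B B' : K) (f : hom A A') (g g' : hom B B'),
      tensm M f (add g g') = add (tensm M f g) (tensm M f g') }.
Arguments zero {K M} c A B : rename.
Arguments add {K M} c {A B} f g : rename.

Record Functor (K K' : Cat) := {
  fo :> K -> K';
  fm : forall X Y : K, hom X Y -> hom (fo X) (fo Y);
  fm_id : forall X : K, fm (idm X) = idm (fo X);
  fm_comp : forall (X Y Z : K) (f : hom X Y) (g : hom Y Z), fm (f >> g) = fm f >> fm g }.
Arguments fm {K K'} f {X Y} f0 : rename.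

Definition isIso (K : Cat) (A B : K) (f : hom A B) : Prop :=
  exists g : hom B A, f >> g = idm A /\ g >> f = idm B.

Record LNLdata := {
  Cc : Cat;  CP : Cartesian Cc;
  Lc : Cat;  LM : SMC Lc;
  LA : Additive LM;
  LP : Cartesian Lc;
  Ff : Functor Cc Lc;  Uf : Functor Lc Cc;
  mm  : forall X Y : Cc, hom (tens LM (Ff X) (Ff Y)) (Ff (prod CP X Y));
  mmi : forall X Y : Cc, hom (Ff (prod CP X Y)) (tens LM (Ff X) (Ff Y));
  m1  : hom (unit LM) (Ff (term CP));
  m1i : hom (Ff (term CP)) (unit LM);
  nn  : forall A B : Lc, hom (prod CP (Uf A) (Uf B)) (Uf (tens LM A B));
  n1  : hom (term CP) (Uf (unit LM));
  eta : forall X : Cc, hom X (Uf (Ff X));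
  eps : forall A : Lc, hom (Ff (Uf A)) A }.
Arguments mm : clear implicits.
Arguments mmi : clear implicits.
Arguments nn : clear implicits.
Arguments eta : clear implicits.
Arguments eps : clear implicits.
Arguments m1 : clear implicits.
Arguments m1i : clear implicits.
Arguments n1 : clear implicits.

Section LNLsec.
Variable G : LNLdata.

Local Notation "A ⊗ B" := (tens (LM G) A B) (at level 30, right associativity).
Local Notation "f ⊗' g" := (tensm (LM G) f g) (at level 30, right associativity).
Local Notation "X × Y" := (prod (CP G) X Y) (at level 30, right associativity).
Local Notation "A ⊕ B" := (prod (LP G) A B) (at level 30, right associativity).
Local Notation F := (Ff G).
Local Notation U := (Uf G).
Local Notation "'α'" := (asc (LM G) _ _ _).
Local Notation "'αi'" := (asci (LM G) _ _ _).
Local Notation one := (unit (LM G)).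

Record LNLax : Prop := {
  eta_nat : forall (X Y : Cc G) (f : hom X Y), f >> eta G Y = eta G X >> fm U (fm F f);
  eps_nat : forall (A B : Lc G) (f : hom A B), fm F (fm U f) >> eps G B = eps G A >> f;
  tri1 : forall X : Cc G, fm F (eta G X) >> eps G (F X) = idm (F X);
  tri2 : forall A : Lc G, eta G (U A) >> fm U (eps G A) = idm (U A);
  m_iso1 : forall X Y : Cc G, mm G X Y >> mmi G X Y = idm _;
  m_iso2 : forall X Y : Cc G, mmi G X Y >> mm G X Y = idm _;
  m1_iso1 : m1 G >> m1i G = idm _;
  m1_iso2 : m1i G >> m1 G = idm _;
  m_nat : forall (X Y X' Y' : Cc G) (f : hom X X') (g : hom Y Y'),
      fm F f ⊗' fm F g >> mm G X' Y' = mm G X Y >> fm F (prodm (CP G) f g);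
  m_assoc : forall X Y Z : Cc G,
      (mm G X Y ⊗' idm (F Z)) >> mm G (X × Y) Z >> fm F (assocC (CP G) X Y Z)
      = α >> (idm (F X) ⊗' mm G Y Z) >> mm G X (Y × Z);
  m_unitl : forall X : Cc G,
      (m1 G ⊗' idm (F X)) >> mm G _ X >> fm F (pr2 (CP G) _ X) = lu (LM G) (F X);
  m_unitr : forall X : Cc G,
      (idm (F X) ⊗' m1 G) >> mm G X _ >> fm F (pr1 (CP G) X _) = ru (LM G) (F X);
  m_sym : forall X Y : Cc G,
      mm G X Y >> fm F (swapC (CP G) X Y) = sym (LM G) (F X) (F Y) >> mm G Y X;
  n_nat : forall (A B A' B' : Lc G) (f : hom A A') (g : hom B B'),
      prodm (CP G) (fm U f) (fm U g) >> nn G A' B' = nn G A B >> fm U (f ⊗' g);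
  n_assoc : forall A B D : Lc G,
      prodm (CP G) (nn G A B) (idm (U D)) >> nn G (A ⊗ B) D >> fm U (asc (LM G) A B D)
      = assocC (CP G) (U A) (U B) (U D) >> prodm (CP G) (idm (U A)) (nn G B D) >> nn G A (B ⊗ D);
  n_unitl : forall A : Lc G,
      prodm (CP G) (n1 G) (idm (U A)) >> nn G one A >> fm U (lu (LM G) A) = pr2 (CP G) _ (U A);
  n_unitr : forall A : Lc G,
      prodm (CP G) (idm (U A)) (n1 G) >> nn G A one >> fm U (ru (LM G) A) = pr1 (CP G) (U A) _;
  n_sym : forall A B : Lc G,
      nn G A B >> fm U (sym (LM G) A B) = swapC (CP G) (U A) (U B) >> nn G B A;
  eta_mon : forall X Y : Cc G,
      prodm (CP G) (eta G X) (eta G Y) >> nn G (F X) (F Y) >> fm U (mm G X Y) = eta G (X × Y);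
  eta_mon1 : n1 G >> fm U (m1 G) = eta G (term (CP G));
  eps_mon : forall A B : Lc G,
      mm G (U A) (U B) >> fm F (nn G A B) >> eps G (A ⊗ B) = eps G A ⊗' eps G B;
  eps_mon1 : m1 G >> fm F (n1 G) >> eps G one = idm one }.

Definition cX (X : Cc G) : hom (F X) (F X ⊗ F X) := fm F (diagC (CP G) X) >> mmi G X X.
Definition wX (X : Cc G) : hom (F X) one := fm F (bang (CP G) X) >> m1i G.
Definition cA (A : Lc G) := cX (U A).
Definition wA (A : Lc G) := wX (U A).
(* comultiplication of ! = FU *)
Definition pp (A : Lc G) : hom (F (U A)) (F (U (F (U A)))) := fm F (eta G (U A)).
Definition inj2 (A B : Lc G) : hom B (A ⊕ B) := pair (LP G) (zero (LA G) B A) (idm B).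

Definition LSob := (Cc G * Lc G)%type.
Definition LShom (P Q : LSob) : Type :=
  (hom (fst P) (fst Q) * hom (F (fst P) ⊗ snd P) (snd Q))%type.
Definition LScomp (P Q R : LSob) (x : LShom P Q) (y : LShom Q R) : LShom P R :=
  (fst x >> fst y,
   (cX (fst P) ⊗' idm (snd P)) >> α >> (fm F (fst x) ⊗' snd x) >> snd y).
Definition LSid (P : LSob) : LShom P P :=
  (idm (fst P), (wX (fst P) ⊗' idm (snd P)) >> lu (LM G) (snd P)).
(* pairing into the product (X,A) x (Y,B) = (X x Y, A ⊕ B) of LS(C) *)
Definition LSpair (P Q R : LSob) (x : LShom P Q) (y : LShom P R)
  : LShom P (fst Q × fst R, snd Q ⊕ snd R) :=
  (pair (CP G) (fst x) (fst y), pair (LP G) (snd x) (snd y)).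
Definition castsrc (X : Cc G) (A A' : Lc G) (Q : LSob) (e : A = A') (x : LShom (X, A') Q)
  : LShom (X, A) Q :=
  match e in (_ = A0) return (LShom (X, A0) Q -> LShom (X, A) Q) with
  | eq_refl => fun z => z end x.

Definition brace (X Y : Cc G) (A B : Lc G) (x : LShom (X, A) (Y, B)) : hom (X × U A) (Y × U B) :=
  pair (CP G) (pr1 (CP G) X (U A) >> fst x)
    (prodm (CP G) (eta G X) (idm (U A)) >> nn G (F X) A >> fm U (snd x)).
Definition Wm (X Y : Cc G) (A B : Lc G) (x : LShom (X, A) (Y, B))
  : LShom (X × U A, A) (Y × U B, B) :=
  (brace x, (fm F (pr1 (CP G) X (U A)) ⊗' idm A) >> snd x).

(* Data of the functor T : C -> LS(C) with ls o T = id:  T(X) = (X, lam X), T(f) = (f, Tm f);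
   together with a chosen inverse of phi. *)
Record GDSCdata := {
  lam : Cc G -> Lc G;
  Tm : forall X Y : Cc G, hom X Y -> hom (F X ⊗ lam X) (lam Y);
  phii : forall X Y : Cc G, LShom (X × Y, lam X ⊕ lam Y) (X × Y, lam (X × Y)) }.

Section Tsec.
Variable T : GDSCdata.
Definition Tob (X : Cc G) : LSob := (X, lam T X).
Definition TLS (X Y : Cc G) (f : hom X Y) : LShom (Tob X) (Tob Y) := (f, Tm T f).
Definition phi (X Y : Cc G) : LShom (Tob (X × Y)) (X × Y, lam T X ⊕ lam T Y) :=
  LSpair (TLS (pr1 (CP G) X Y)) (TLS (pr2 (CP G) X Y)).
Definition i2 (X Y : Cc G) : LShom (X × Y, lam T Y) (X × Y, lam T (X × Y)) :=
  LScomp (P := (X × Y, lam T Y)) (Q := (X × Y, lam T X ⊕ lam T Y))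
    (idm (X × Y), (wX (X × Y) ⊗' inj2 (lam T X) (lam T Y)) >> lu (LM G) _)
    (phii T X Y).

Record GDSCax : Prop := {
  T_id : forall X : Cc G, TLS (idm X) = LSid (Tob X);
  T_comp : forall (X Y Z : Cc G) (f : hom X Y) (g : hom Y Z), TLS (f >> g) = LScomp (TLS f) (TLS g);
  phi_inv1 : forall X Y : Cc G, LScomp (phi X Y) (phii T X Y) = LSid _;
  phi_inv2 : forall X Y : Cc G, LScomp (phii T X Y) (phi X Y) = LSid _;
  lam_U : forall A : Lc G, lam T (U A) = A;
  t3 : forall (X Y : Cc G) (A B : Lc G) (x : LShom (X, A) (Y, B)),
      LScomp (Wm x) (castsrc (eq_sym (lam_U B)) (i2 Y (U B)))
      = LScomp (castsrc (eq_sym (lam_U A)) (i2 X (U A))) (TLS (brace x)) }.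
End Tsec.

Definition DiffSeely : Prop :=
  (forall A : Lc G, pp A >> eps G (F (U A)) = idm _) /\
  (forall A : Lc G, pp A >> fm F (fm U (eps G A)) = idm _) /\
  (forall A : Lc G, pp A >> pp (F (U A)) = pp A >> fm F (fm U (pp A))) /\
  (* Seely isomorphisms !(A ⊕ B) ≅ !A ⊗ !B and !0 ≅ 1 (inducing the comonoids cA, wA) *)
  (forall A B : Lc G,
      isIso (fm F (pair (CP G) (fm U (pr1 (LP G) A B)) (fm U (pr2 (LP G) A B))) >> mmi G (U A) (U B))) /\
  isIso (fm F (bang (CP G) (U (term (LP G)))) >> m1i G) /\
  exists dd : forall A : Lc G, hom (F (U A) ⊗ A) (F (U A)),
    (forall (A B : Lc G) (f : hom A B), (fm F (fm U f) ⊗' f) >> dd B = dd A >> fm F (fm U f)) /\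
    (forall A : Lc G, dd A >> wA A = zero (LA G) _ _) /\
    (forall A : Lc G, dd A >> cA A
        = (cA A ⊗' idm A) >> α >>
          add (LA G) (idm (F (U A)) ⊗' dd A)
                     ((idm (F (U A)) ⊗' sym (LM G) (F (U A)) A) >> αi >> (dd A ⊗' idm (F (U A))))) /\
    (forall A : Lc G, dd A >> eps G A = (wA A ⊗' idm A) >> lu (LM G) A) /\
    (forall A : Lc G, dd A >> pp A = (cA A ⊗' idm A) >> α >> (pp A ⊗' dd A) >> dd (F (U A))) /\
    (forall A : Lc G, α >> (idm (F (U A)) ⊗' sym (LM G) A A) >> αi >> (dd A ⊗' idm A) >> dd A
        = (dd A ⊗' idm A) >> dd A).

End LNLsec.

Set Implicit Arguments.
Unset Strict Implicit.

(* A morphism (id, u) : (X, A) -> (X, B) of LS(C) is a map u : F X ⊗ A -> B, linear in A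
   and parameterised by X; such maps compose through the comonoid structure of F X, and T
   sends f : X -> Y to its derivative Tm f : F X ⊗ λX -> λY, functoriality of T being the
   chain rule.  As λ(U A) = A, every g : U A -> U B has a derivative !A ⊗ A -> B, and the
   deriving transformation ∂_A is the derivative of η_(U A).  Axiom (t.3) says that a map
   U(u), linear in its second variable, is its own derivative; with the chain rule this
   gives naturality of ∂ and the laws for w, d and p.  Since φ is invertible, the
   derivative of a pairing is the sum of the two partial derivatives; applied to the
   diagonal, through which c factors, this is the Leibniz law.  Finally ∂ = (1 ⊗ e) ; ∇,
   where e : A -> !A is ∂ at zero and ∇ : !A ⊗ !A -> !A is induced by the addition of A;
   interchange then follows from associativity and commutativity of ∇. *)

Lemma chain_rw2 {K : Cat} {A B D E : K} {f : hom A B} {g : hom B D} {h : hom A D} :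
  f >> g = h -> forall k : hom D E, f >> (g >> k) = h >> k.
Proof. intros H k. rewrite <- comp_assoc, H. reflexivity. Qed.

Lemma chain_rw3 {K : Cat} {A B D E F : K} {f : hom A B} {g : hom B D} {h : hom D E}
  {r : hom A E} :
  f >> (g >> h) = r -> forall k : hom E F, f >> (g >> (h >> k)) = r >> k.
Proof. intros H k. rewrite <- (comp_assoc g h k), <- comp_assoc, H. reflexivity. Qed.

Lemma chain_rw4 {K : Cat} {A B D E F X : K} {f : hom A B} {g : hom B D} {h : hom D E}
  {i : hom E F} {r : hom A F} :
  f >> (g >> (h >> i)) = r -> forall k : hom F X, f >> (g >> (h >> (i >> k))) = r >> k.
Proof.
  intros H k. rewrite <- (comp_assoc h i k), <- (comp_assoc g _ k), <- comp_assoc, H.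
  reflexivity.
Qed.

Lemma chain_rw5 {K : Cat} {A B D E F X Y : K} {f : hom A B} {g : hom B D} {h : hom D E}
  {i : hom E F} {j : hom F X} {r : hom A X} :
  f >> (g >> (h >> (i >> j))) = r ->
  forall k : hom X Y, f >> (g >> (h >> (i >> (j >> k)))) = r >> k.
Proof.
  intros H k.
  rewrite <- (comp_assoc i j k), <- (comp_assoc h _ k), <- (comp_assoc g _ k),
    <- comp_assoc, H.
  reflexivity.
Qed.

(* [arewrite E] rewrites with [E] modulo associativity: goal and [E] are right-associated,
   and an [E] whose left side is a chain of up to five arrows also rewrites a prefix of a
   longer chain. *)
Ltac rassoc := rewrite ?comp_assoc.
Ltac rewrite_chain H := rassoc; rewrite ?comp_assoc in H;
  first [ rewrite (chain_rw5 H) | rewrite (chain_rw4 H) | rewrite (chain_rw3 H)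
        | rewrite (chain_rw2 H) | rewrite H ];
  rassoc.
Tactic Notation "arewrite" open_constr(E) :=
  let H := fresh "H" in epose proof E as H; rewrite_chain H; clear H.
Tactic Notation "arewrite" "<-" open_constr(E) :=
  let H := fresh "H" in epose proof (eq_sym E) as H; rewrite_chain H; clear H.

Lemma comp_fm {K K' : Cat} {Fn : Functor K K'} {X Y Z : K} (f : hom X Y) (g : hom Y Z) :
  fm Fn f >> fm Fn g = fm Fn (f >> g).
Proof. rewrite fm_comp. reflexivity. Qed.

Ltac fold_fm := repeat arewrite (comp_fm _ _).

(** * Symmetric monoidal categories *)

Section Monoidal.
Context {K : Cat} {M : SMC K}.
Local Notation "A ⊗ B" := (tens M A B) (at level 30, right associativity).
Local Notation "f ⊗' g" := (tensm M f g) (at level 30, right associativity).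
Local Notation one := (unit M).

Lemma tensm_splitl {A B A' B' : K} (f : hom A A') (g : hom B B') :
  f ⊗' g = (f ⊗' idm B) >> (idm A' ⊗' g).
Proof. rewrite <- tensm_comp, comp_idl, comp_idr. reflexivity. Qed.

Lemma tensm_splitr {A B A' B' : K} (f : hom A A') (g : hom B B') :
  f ⊗' g = (idm A ⊗' g) >> (f ⊗' idm B').
Proof. rewrite <- tensm_comp, comp_idl, comp_idr. reflexivity. Qed.

Lemma tensm_unsplitl {A B A' B' : K} (f : hom A A') (g : hom B B') :
  (f ⊗' idm B) >> (idm A' ⊗' g) = f ⊗' g.
Proof. symmetry; apply tensm_splitl. Qed.

Lemma tensm_unsplitr {A B A' B' : K} (f : hom A A') (g : hom B B') :
  (idm A ⊗' g) >> (f ⊗' idm B') = f ⊗' g.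
Proof. symmetry; apply tensm_splitr. Qed.

Lemma tensm_interchange {A B A' B' : K} (f : hom A A') (g : hom B B') :
  (idm A ⊗' g) >> (f ⊗' idm B') = (f ⊗' idm B) >> (idm A' ⊗' g).
Proof. rewrite tensm_unsplitr, tensm_unsplitl. reflexivity. Qed.

Lemma tensm_compl {A B D E : K} (f : hom A B) (g : hom B D) :
  (f ⊗' idm E) >> (g ⊗' idm E) = (f >> g) ⊗' idm E.
Proof. rewrite <- tensm_comp, comp_idl. reflexivity. Qed.

Lemma tensm_compr {A B D E : K} (f : hom A B) (g : hom B D) :
  (idm E ⊗' f) >> (idm E ⊗' g) = idm E ⊗' (f >> g).
Proof. rewrite <- tensm_comp, comp_idl. reflexivity. Qed.

Lemma tensm_postl {A B A' B' D : K} (f : hom A A') (g : hom B B') (h : hom A' D) :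
  (f ⊗' g) >> (h ⊗' idm B') = (f >> h) ⊗' g.
Proof. rewrite <- tensm_comp, comp_idr. reflexivity. Qed.

Lemma tensm_postr {A B A' B' D : K} (f : hom A A') (g : hom B B') (h : hom B' D) :
  (f ⊗' g) >> (idm A' ⊗' h) = f ⊗' (g >> h).
Proof. rewrite <- tensm_comp, comp_idr. reflexivity. Qed.

Lemma tensm_prel {A B A' B' D : K} (f : hom A A') (g : hom B B') (h : hom D A) :
  (h ⊗' idm B) >> (f ⊗' g) = (h >> f) ⊗' g.
Proof. rewrite <- tensm_comp, comp_idl. reflexivity. Qed.

Lemma tensm_prer {A B A' B' D : K} (f : hom A A') (g : hom B B') (h : hom D B) :
  (idm A ⊗' h) >> (f ⊗' g) = f ⊗' (h >> g).
Proof. rewrite <- tensm_comp, comp_idl. reflexivity. Qed.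

Lemma asc_natl {A A' B D : K} (f : hom A A') :
  ((f ⊗' idm B) ⊗' idm D) >> asc M A' B D = asc M A B D >> (f ⊗' idm (B ⊗ D)).
Proof. rewrite asc_nat, tensm_id. reflexivity. Qed.

Lemma asc_natm {A B B' D : K} (g : hom B B') :
  ((idm A ⊗' g) ⊗' idm D) >> asc M A B' D = asc M A B D >> (idm A ⊗' (g ⊗' idm D)).
Proof. rewrite asc_nat. reflexivity. Qed.

Lemma asc_natr {A B D D' : K} (h : hom D D') :
  (idm (A ⊗ B) ⊗' h) >> asc M A B D' = asc M A B D >> (idm A ⊗' (idm B ⊗' h)).
Proof. rewrite <- tensm_id, asc_nat. reflexivity. Qed.

Lemma asci_nat {A B D A' B' D' : K} (f : hom A A') (g : hom B B') (h : hom D D') :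
  (f ⊗' (g ⊗' h)) >> asci M A' B' D' = asci M A B D >> ((f ⊗' g) ⊗' h).
Proof.
  transitivity (asci M A B D >> asc M A B D >> (f ⊗' (g ⊗' h)) >> asci M A' B' D').
  - rewrite asc_iso2, comp_idl. reflexivity.
  - arewrite <- (asc_nat M _ _ _). arewrite (asc_iso1 _ _ _ _). rewrite comp_idr.
    reflexivity.
Qed.

Lemma asc_sym (A B D : K) : asc M A B D >> sym M A (B ⊗ D) =
  (sym M A B ⊗' idm D) >> asc M B A D >> (idm B ⊗' sym M A D) >> asci M B D A.
Proof. rewrite <- hexagon. rassoc. rewrite asc_iso1, comp_idr. reflexivity. Qed.

Lemma tensm_unit_inj {A B : K} (f g : hom A B) : idm one ⊗' f = idm one ⊗' g -> f = g.
Proof.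
  intro H.
  assert (E : forall h : hom A B, h = lui M A >> (idm one ⊗' h) >> lu M B).
  { intro h. rassoc. rewrite lu_nat, <- comp_assoc, lu_iso2, comp_idl. reflexivity. }
  rewrite (E f), (E g), H. reflexivity.
Qed.

(* Kelly's lemma: after tensoring with the unit it becomes an instance of the pentagon
   and two triangles, up to the invertible arrow [P]. *)
Lemma asc_lu (B D : K) : asc M one B D >> lu M (B ⊗ D) = lu M B ⊗' idm D.
Proof.
  apply tensm_unit_inj.
  set (P := (asc M one one B ⊗' idm D) >> asc M one (one ⊗ B) D).
  assert (P_epi : forall (X : K) (p q : hom (one ⊗ ((one ⊗ B) ⊗ D)) X),
             P >> p = P >> q -> p = q).
  { intros X p q H.
    assert (E : forall r : hom _ X,
               r = (asci M one (one ⊗ B) D >> (asci M one one B ⊗' idm D)) >> (P >> r)).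
    { intro r. unfold P. rassoc. arewrite (tensm_compl _ _). arewrite (asc_iso2 _ _ _ _).
      rewrite tensm_id, comp_idl. arewrite (asc_iso2 _ _ _ _). rewrite comp_idl.
      reflexivity. }
    rewrite (E p), (E q), H. reflexivity. }
  apply P_epi. unfold P.
  rewrite <- (tensm_compr (asc M one B D) (lu M (B ⊗ D))).
  arewrite <- (pentagon M one one B D). arewrite (triangle M one (B ⊗ D)).
  arewrite <- (asc_natl _). rewrite <- (triangle M one B).
  arewrite <- (tensm_compl _ _). arewrite (asc_natm _). reflexivity.
Qed.
End Monoidal.

(** * Cartesian and additive structure *)

Section Cartesian.
Context {K : Cat} {P : Cartesian K}.

Lemma pair_pr1_assoc {Z X Y W : K} (f : hom Z X) (g : hom Z Y) (k : hom X W) :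
  pair P f g >> (pr1 P X Y >> k) = f >> k.
Proof. rewrite <- comp_assoc, pair_pr1. reflexivity. Qed.

Lemma pair_pr2_assoc {Z X Y W : K} (f : hom Z X) (g : hom Z Y) (k : hom Y W) :
  pair P f g >> (pr2 P X Y >> k) = g >> k.
Proof. rewrite <- comp_assoc, pair_pr2. reflexivity. Qed.

Lemma pair_ext {Z X Y : K} (h k : hom Z (prod P X Y)) :
  h >> pr1 P X Y = k >> pr1 P X Y -> h >> pr2 P X Y = k >> pr2 P X Y -> h = k.
Proof. intros H1 H2. rewrite (pair_uniq h), (pair_uniq k), H1, H2. reflexivity. Qed.

Lemma comp_pair {W Z X Y : K} (h : hom W Z) (f : hom Z X) (g : hom Z Y) :
  h >> pair P f g = pair P (h >> f) (h >> g).
Proof. apply pair_ext; rassoc; rewrite ?pair_pr1, ?pair_pr2; reflexivity. Qed.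

Lemma comp_pair_assoc {W Z X Y V : K} (h : hom W Z) (f : hom Z X) (g : hom Z Y)
  (k : hom (prod P X Y) V) :
  h >> (pair P f g >> k) = pair P (h >> f) (h >> g) >> k.
Proof. rewrite <- comp_assoc, comp_pair. reflexivity. Qed.

Lemma pair_pr {X Y : K} : pair P (pr1 P X Y) (pr2 P X Y) = idm _.
Proof. apply pair_ext; rewrite ?pair_pr1, ?pair_pr2, ?comp_idl; reflexivity. Qed.

Lemma term_hom_eq {X : K} (f g : hom X (term P)) : f = g.
Proof. rewrite (bang_uniq f), (bang_uniq g). reflexivity. Qed.

Lemma swapK (X Y : K) : swapC P X Y >> swapC P Y X = idm _.
Proof. unfold swapC. rewrite comp_pair, pair_pr1, pair_pr2. apply pair_pr. Qed.
End Cartesian.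

Ltac pair_simpl := repeat progress (rassoc;
  rewrite ?pair_pr1, ?pair_pr2, ?pair_pr1_assoc, ?pair_pr2_assoc, ?comp_pair, ?comp_pair_assoc,
    ?comp_idl, ?comp_idr).
Ltac unfold_cart := unfold prodm, diagC, swapC, assocC in *.

Section Additive.
Context {K : Cat} {M : SMC K} {a : Additive M} {P : Cartesian K}.

Lemma add_0r {X Y : K} (f : hom X Y) : add a f (zero a X Y) = f.
Proof. rewrite add_comm, add_0l. reflexivity. Qed.

Lemma add_pair {Z X Y : K} (f f' : hom Z X) (g g' : hom Z Y) :
  add a (pair P f g) (pair P f' g') = pair P (add a f f') (add a g g').
Proof. apply pair_ext; rewrite comp_addl, ?pair_pr1, ?pair_pr2; reflexivity. Qed.

Lemma pair_split {Z X Y : K} (f : hom Z X) (g : hom Z Y) :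
  pair P f g = add a (pair P f (zero a _ _)) (pair P (zero a _ _) g).
Proof. rewrite add_pair, add_0l, add_0r. reflexivity. Qed.
End Additive.

(** * The linear-non-linear adjunction *)

Section GDSC.
Variable G : LNLdata.
Hypothesis HG : LNLax G.
Variable T : GDSCdata G.
Hypothesis HT : GDSCax T.

Local Notation "A ⊗ B" := (tens (LM G) A B) (at level 30, right associativity).
Local Notation "f ⊗' g" := (tensm (LM G) f g) (at level 30, right associativity).
Local Notation "X × Y" := (prod (CP G) X Y) (at level 30, right associativity).
Local Notation "A ⊕ B" := (prod (LP G) A B) (at level 30, right associativity).
Local Notation F := (Ff G).
Local Notation U := (Uf G).
Local Notation one := (unit (LM G)).
Local Notation LM := (LM G).
Local Notation LA := (LA G).
Local Notation lam := (lam T).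
Local Notation D := (Tm T).

Lemma mmi_nat {X Y X' Y' : Cc G} (f : hom X X') (g : hom Y Y') :
  mmi G X Y >> (fm F f ⊗' fm F g) = fm F (prodm (CP G) f g) >> mmi G X' Y'.
Proof.
  transitivity (mmi G X Y >> (fm F f ⊗' fm F g) >> mm G X' Y' >> mmi G X' Y').
  - rassoc. rewrite (m_iso1 HG), comp_idr. reflexivity.
  - arewrite (m_nat HG f g). arewrite (m_iso2 HG _ _). rewrite comp_idl. reflexivity.
Qed.

Lemma mmi_natl {X Y X' : Cc G} (f : hom X X') :
  mmi G X Y >> (fm F f ⊗' idm (F Y)) = fm F (prodm (CP G) f (idm Y)) >> mmi G X' Y.
Proof. rewrite <- mmi_nat, fm_id. reflexivity. Qed.

Lemma mmi_natr {X Y Y' : Cc G} (g : hom Y Y') :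
  mmi G X Y >> (idm (F X) ⊗' fm F g) = fm F (prodm (CP G) (idm X) g) >> mmi G X Y'.
Proof. rewrite <- mmi_nat, fm_id. reflexivity. Qed.

Lemma mmi_sym (X Y : Cc G) :
  mmi G X Y >> sym LM (F X) (F Y) = fm F (swapC (CP G) X Y) >> mmi G Y X.
Proof.
  transitivity (mmi G X Y >> sym LM (F X) (F Y) >> mm G Y X >> mmi G Y X).
  - rassoc. rewrite (m_iso1 HG), comp_idr. reflexivity.
  - arewrite <- (m_sym HG _ _). arewrite (m_iso2 HG _ _). rewrite comp_idl. reflexivity.
Qed.

Lemma asc_FE (X Y Z : Cc G) : asc LM (F X) (F Y) (F Z) =
  (mm G X Y ⊗' idm (F Z)) >> mm G (X × Y) Z >> fm F (assocC (CP G) X Y Z)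
  >> mmi G X (Y × Z) >> (idm (F X) ⊗' mmi G Y Z).
Proof.
  rewrite (m_assoc HG). rassoc. arewrite (m_iso1 HG _ _).
  rewrite comp_idl, tensm_compr, (m_iso1 HG), tensm_id, comp_idr. reflexivity.
Qed.

Lemma cX_nat {X Y : Cc G} (f : hom X Y) : fm F f >> cX Y = cX X >> (fm F f ⊗' fm F f).
Proof.
  unfold cX. rassoc. rewrite mmi_nat. fold_fm. do 2 f_equal.
  unfold_cart. pair_simpl. reflexivity.
Qed.

Lemma wX_nat {X Y : Cc G} (f : hom X Y) : fm F f >> wX Y = wX X.
Proof. unfold wX. rewrite <- comp_assoc, <- fm_comp. do 2 f_equal. apply term_hom_eq. Qed.

Lemma c_unitl (X : Cc G) : cX X >> (wX X ⊗' idm (F X)) >> lu LM (F X) = idm _.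
Proof.
  unfold cX, wX. rewrite <- (m_unitl HG X). rassoc.
  arewrite (tensm_compl _ _). rewrite (m1_iso2 HG), comp_idr.
  arewrite (mmi_natl _). arewrite (m_iso2 HG _ _). rewrite comp_idl.
  fold_fm. rewrite <- fm_id. f_equal. unfold_cart. pair_simpl. reflexivity.
Qed.

Lemma c_unitr (X : Cc G) : cX X >> (idm (F X) ⊗' wX X) >> ru LM (F X) = idm _.
Proof.
  unfold cX, wX. rewrite <- (m_unitr HG X). rassoc.
  arewrite (tensm_compr _ _). rewrite (m1_iso2 HG), comp_idr.
  arewrite (mmi_natr _). arewrite (m_iso2 HG _ _). rewrite comp_idl.
  fold_fm. rewrite <- fm_id. f_equal. unfold_cart. pair_simpl. reflexivity.
Qed.

Lemma c_assoc (X : Cc G) :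
  cX X >> (cX X ⊗' idm (F X)) >> asc LM _ _ _ = cX X >> (idm (F X) ⊗' cX X).
Proof.
  rewrite asc_FE. unfold cX. rassoc. arewrite (tensm_compl _ _).
  rewrite (m_iso2 HG), comp_idr. arewrite (mmi_natl _). arewrite (m_iso2 HG _ _).
  rewrite comp_idl, <- (tensm_compr (fm F (diagC (CP G) X)) (mmi G X X)).
  arewrite (mmi_natr _). fold_fm. do 2 f_equal. unfold_cart. pair_simpl. reflexivity.
Qed.

Lemma c_comm (X : Cc G) : cX X >> sym LM (F X) (F X) = cX X.
Proof.
  unfold cX. rassoc. rewrite mmi_sym, <- comp_assoc, <- fm_comp. do 2 f_equal.
  unfold_cart. pair_simpl. reflexivity.
Qed.

Lemma eta_transpose {Z : Cc G} {A : Lc G} (g : hom Z (U A)) :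
  g = eta G Z >> fm U (fm F g >> eps G A).
Proof.
  rewrite fm_comp, <- comp_assoc, <- (eta_nat HG g). rassoc.
  rewrite (tri2 HG), comp_idr. reflexivity.
Qed.

Lemma transpose_inj {Z : Cc G} {A : Lc G} (g h : hom Z (U A)) :
  fm F g >> eps G A = fm F h >> eps G A -> g = h.
Proof. intro H. rewrite (eta_transpose g), (eta_transpose h), H. reflexivity. Qed.

Lemma U_term_hom_eq {Z : Cc G} (g h : hom Z (U (term (LP G)))) : g = h.
Proof. apply transpose_inj, term_hom_eq. Qed.

Definition uprod (A B : Lc G) : hom (U (A ⊕ B)) (U A × U B) :=
  pair (CP G) (fm U (pr1 (LP G) A B)) (fm U (pr2 (LP G) A B)).

Definition uprod_inv (A B : Lc G) : hom (U A × U B) (U (A ⊕ B)) :=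
  eta G _ >> fm U (pair (LP G) (fm F (pr1 (CP G) _ _) >> eps G A)
                               (fm F (pr2 (CP G) _ _) >> eps G B)).

Lemma uprod_inv_eps (A B : Lc G) : fm F (uprod_inv A B) >> eps G _ =
  pair (LP G) (fm F (pr1 (CP G) _ _) >> eps G A) (fm F (pr2 (CP G) _ _) >> eps G B).
Proof.
  unfold uprod_inv. rewrite fm_comp. rassoc. rewrite (eps_nat HG).
  arewrite (tri1 HG _). apply comp_idl.
Qed.

Lemma uprodK (A B : Lc G) : uprod A B >> uprod_inv A B = idm _.
Proof.
  apply transpose_inj. rewrite fm_comp. rassoc.
  rewrite uprod_inv_eps, fm_id, comp_idl, comp_pair. unfold uprod. rassoc. fold_fm.
  rewrite pair_pr1, pair_pr2, !(eps_nat HG), <- comp_pair, pair_pr. apply comp_idr.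
Qed.

Lemma uprod_invK (A B : Lc G) : uprod_inv A B >> uprod A B = idm _.
Proof.
  apply pair_ext; unfold uprod; rassoc; rewrite ?pair_pr1, ?pair_pr2, comp_idl;
    apply transpose_inj; rewrite fm_comp; rassoc; rewrite (eps_nat HG);
    arewrite (uprod_inv_eps _ _); rewrite ?pair_pr1, ?pair_pr2; reflexivity.
Qed.

Definition uadd (A : Lc G) : hom (U A × U A) (U A) :=
  uprod_inv A A >> fm U (add LA (pr1 (LP G) A A) (pr2 (LP G) A A)).

Lemma uadd_eps (A : Lc G) : fm F (uadd A) >> eps G A =
  add LA (fm F (pr1 (CP G) _ _) >> eps G A) (fm F (pr2 (CP G) _ _) >> eps G A).
Proof.
  unfold uadd. rewrite fm_comp. rassoc. rewrite (eps_nat HG).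
  arewrite (uprod_inv_eps _ _). rewrite comp_addr, pair_pr1, pair_pr2. reflexivity.
Qed.

Lemma uaddA (A : Lc G) : prodm (CP G) (uadd A) (idm _) >> uadd A =
  assocC (CP G) _ _ _ >> prodm (CP G) (idm _) (uadd A) >> uadd A.
Proof.
  apply transpose_inj. rewrite !fm_comp. rassoc. rewrite !uadd_eps, !comp_addr.
  fold_fm. unfold_cart. pair_simpl. rewrite <- !comp_fm. rassoc.
  rewrite !uadd_eps, !comp_addr. fold_fm. pair_simpl. apply add_assoc.
Qed.

Lemma uaddC (A : Lc G) : swapC (CP G) _ _ >> uadd A = uadd A.
Proof.
  apply transpose_inj. rewrite !fm_comp. rassoc. rewrite !uadd_eps, !comp_addr.
  fold_fm. unfold_cart. pair_simpl. apply add_comm.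
Qed.

Lemma pp_FU_eps (A : Lc G) : pp A >> fm F (fm U (eps G A)) = idm _.
Proof. unfold pp. rewrite comp_fm, (tri2 HG), fm_id. reflexivity. Qed.

Lemma pp_coassoc (A : Lc G) : pp A >> pp (F (U A)) = pp A >> fm F (fm U (pp A)).
Proof. unfold pp. rewrite !comp_fm, (eta_nat HG (eta G (U A))). reflexivity. Qed.

Lemma seely_iso (A B : Lc G) :
  isIso (fm F (pair (CP G) (fm U (pr1 (LP G) A B)) (fm U (pr2 (LP G) A B)))
         >> mmi G (U A) (U B)).
Proof.
  exists (mm G _ _ >> fm F (uprod_inv A B)). fold (uprod A B). split.
  - rassoc. arewrite (m_iso2 HG _ _). rewrite comp_idl, comp_fm, uprodK, fm_id.
    reflexivity.
  - rassoc. arewrite (comp_fm _ _). rewrite uprod_invK, fm_id, comp_idl. apply (m_iso1 HG).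
Qed.

Definition term_U0 : hom (term (CP G)) (U (term (LP G))) := eta G _ >> fm U (zero LA _ _).

Lemma seely_iso0 : isIso (fm F (bang (CP G) (U (term (LP G)))) >> m1i G).
Proof.
  exists (m1 G >> fm F term_U0). split.
  - rassoc. arewrite (m1_iso2 HG). rewrite comp_idl, comp_fm.
    rewrite (U_term_hom_eq (bang (CP G) _ >> term_U0) (idm _)), fm_id. reflexivity.
  - rassoc. arewrite (comp_fm _ _).
    rewrite (term_hom_eq (term_U0 >> bang (CP G) _) (idm _)), fm_id, comp_idl.
    apply (m1_iso1 HG).
Qed.

(** * Composition in the fibres of LS(C) *)

(* [fib_comp u v] is the second component of (id, u) ; (id, v) in LS(C): the comonoid [cX X]
   duplicates the parameter and feeds one copy to each factor. *)
Definition fib_comp {X : Cc G} {A B C : Lc G} (u : hom (F X ⊗ A) B) (v : hom (F X ⊗ B) C)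
  : hom (F X ⊗ A) C :=
  (cX X ⊗' idm A) >> asc LM _ _ _ >> (idm (F X) ⊗' u) >> v.

Definition fib_id (X : Cc G) (A : Lc G) : hom (F X ⊗ A) A := (wX X ⊗' idm A) >> lu LM A.

Definition reindex {X Y : Cc G} (f : hom X Y) {B C : Lc G} (v : hom (F Y ⊗ B) C)
  : hom (F X ⊗ B) C :=
  (fm F f ⊗' idm B) >> v.

Lemma fib_comp_coh (X : Cc G) (A : Lc G) :
  (cX X ⊗' idm A) >> asc LM _ _ _ >> (cX X ⊗' idm (F X ⊗ A)) >> asc LM _ _ _ =
  (cX X ⊗' idm A) >> asc LM _ _ _ >> (idm (F X) ⊗' (cX X ⊗' idm A))
  >> (idm (F X) ⊗' asc LM _ _ _).
Proof.
  arewrite <- (asc_natl _). arewrite (pentagon LM _ _ _ _).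
  arewrite (tensm_compl _ _). arewrite (tensm_compl _ _). arewrite (c_assoc _).
  rewrite <- (tensm_compl (cX X) (idm (F X) ⊗' cX X)). rassoc.
  arewrite (asc_natm _). reflexivity.
Qed.

Lemma fib_compA {X : Cc G} {A B C E : Lc G} (u : hom (F X ⊗ A) B) (v : hom (F X ⊗ B) C)
  (t : hom (F X ⊗ C) E) :
  fib_comp (fib_comp u v) t = fib_comp u (fib_comp v t).
Proof.
  unfold fib_comp. rassoc. arewrite (tensm_interchange _ _). arewrite (asc_natr _).
  rewrite <- !tensm_compr. rassoc. arewrite <- (fib_comp_coh _ _). reflexivity.
Qed.

Lemma fib_comp1l {X : Cc G} {A C : Lc G} (v : hom (F X ⊗ A) C) : fib_comp (fib_id X A) v = v.
Proof.
  unfold fib_comp, fib_id. rewrite <- tensm_compr. rassoc.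
  arewrite <- (asc_natm _). arewrite (triangle LM _ _).
  arewrite (tensm_compl _ _). arewrite (tensm_compl _ _). arewrite (c_unitr _).
  rewrite tensm_id, comp_idl. reflexivity.
Qed.

Lemma fib_comp1r {X : Cc G} {A B : Lc G} (u : hom (F X ⊗ A) B) : fib_comp u (fib_id X B) = u.
Proof.
  unfold fib_comp, fib_id. rassoc. arewrite (tensm_interchange _ _). arewrite (lu_nat _ _).
  arewrite <- (asc_natl _). arewrite (asc_lu _ _).
  arewrite (tensm_compl _ _). arewrite (tensm_compl _ _). arewrite (c_unitl _).
  rewrite tensm_id, comp_idl. reflexivity.
Qed.

Lemma fib_comp_pre {X : Cc G} {A A' B C : Lc G} (h : hom A' A) (u : hom (F X ⊗ A) B)
  (v : hom (F X ⊗ B) C) :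
  (idm (F X) ⊗' h) >> fib_comp u v = fib_comp ((idm (F X) ⊗' h) >> u) v.
Proof.
  unfold fib_comp. rassoc. arewrite (tensm_interchange _ _). arewrite (asc_natr _).
  arewrite (tensm_compr _ _). reflexivity.
Qed.

Lemma fib_comp_post {X : Cc G} {A B C E : Lc G} (u : hom (F X ⊗ A) B) (v : hom (F X ⊗ B) C)
  (h : hom C E) :
  fib_comp u v >> h = fib_comp u (v >> h).
Proof. unfold fib_comp. rassoc. reflexivity. Qed.

Lemma fib_comp_mid {X : Cc G} {A B B' C : Lc G} (u : hom (F X ⊗ A) B) (h : hom B B')
  (v : hom (F X ⊗ B') C) :
  fib_comp (u >> h) v = fib_comp u ((idm (F X) ⊗' h) >> v).
Proof. unfold fib_comp. rewrite <- tensm_compr. rassoc. reflexivity. Qed.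

Lemma fib_id_nat {X : Cc G} {A B : Lc G} (h : hom A B) :
  (idm (F X) ⊗' h) >> fib_id X B = fib_id X A >> h.
Proof. unfold fib_id. arewrite (tensm_interchange _ _). rewrite lu_nat. reflexivity. Qed.

Lemma fib_comp_linl {X : Cc G} {A B C : Lc G} (h : hom A B) (v : hom (F X ⊗ B) C) :
  fib_comp (fib_id X A >> h) v = (idm (F X) ⊗' h) >> v.
Proof. rewrite fib_comp_mid, fib_comp1l. reflexivity. Qed.

Lemma fib_comp_linr {X : Cc G} {A B C : Lc G} (u : hom (F X ⊗ A) B) (h : hom B C) :
  fib_comp u (fib_id X B >> h) = u >> h.
Proof. rewrite <- fib_comp_post, fib_comp1r. reflexivity. Qed.

Lemma fib_compDl {X : Cc G} {A B C : Lc G} (u u' : hom (F X ⊗ A) B) (v : hom (F X ⊗ B) C) :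
  fib_comp (add LA u u') v = add LA (fib_comp u v) (fib_comp u' v).
Proof. unfold fib_comp. rewrite tens_addr, comp_addr, comp_addl. rassoc. reflexivity. Qed.

Lemma fib_comp_pair {X : Cc G} {A B C E : Lc G} (u : hom (F X ⊗ A) B) (v : hom (F X ⊗ B) C)
  (w : hom (F X ⊗ B) E) :
  fib_comp u (pair (LP G) v w) = pair (LP G) (fib_comp u v) (fib_comp u w).
Proof. unfold fib_comp. rewrite !comp_pair. rassoc. reflexivity. Qed.

Lemma reindex_fib_comp {X Y : Cc G} (f : hom X Y) {A B C : Lc G} (u : hom (F Y ⊗ A) B)
  (v : hom (F Y ⊗ B) C) :
  reindex f (fib_comp u v) = fib_comp (reindex f u) (reindex f v).
Proof.
  unfold reindex, fib_comp. rassoc. arewrite (tensm_compl _ _).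
  rewrite (cX_nat f), <- (tensm_compl (cX X) _). rassoc.
  arewrite (asc_nat _ _ _ _). arewrite (tensm_postr _ _ _). arewrite (tensm_unsplitr _ _).
  reflexivity.
Qed.

Lemma reindex_fib_id {X Y : Cc G} (f : hom X Y) (A : Lc G) : reindex f (fib_id Y A) = fib_id X A.
Proof. unfold reindex, fib_id. arewrite (tensm_compl _ _). rewrite wX_nat. reflexivity. Qed.


Lemma reindex_comp {X Y Z : Cc G} (f : hom X Y) (g : hom Y Z) {A B : Lc G}
  (v : hom (F Z ⊗ A) B) :
  reindex (f >> g) v = reindex f (reindex g v).
Proof. unfold reindex. rewrite fm_comp. arewrite <- (tensm_compl _ _). reflexivity. Qed.

Lemma reindex_id {X : Cc G} {A B : Lc G} (v : hom (F X ⊗ A) B) : reindex (idm X) v = v.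
Proof. unfold reindex. rewrite fm_id, tensm_id, comp_idl. reflexivity. Qed.

Lemma reindex_pre {X Y : Cc G} (f : hom X Y) {A A' B : Lc G} (h : hom A' A)
  (v : hom (F Y ⊗ A) B) :
  (idm (F X) ⊗' h) >> reindex f v = reindex f ((idm (F Y) ⊗' h) >> v).
Proof. unfold reindex. arewrite (tensm_interchange _ _). reflexivity. Qed.

Lemma reindex_post {X Y : Cc G} (f : hom X Y) {A B C : Lc G} (v : hom (F Y ⊗ A) B)
  (h : hom B C) :
  reindex f v >> h = reindex f (v >> h).
Proof. unfold reindex. rassoc. reflexivity. Qed.

Lemma reindex_lin {X Y : Cc G} (f : hom X Y) {A B : Lc G} (h : hom A B) :
  reindex f (fib_id Y A >> h) = fib_id X A >> h.
Proof. rewrite <- reindex_post, reindex_fib_id. reflexivity. Qed.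

Lemma reindex_pair {X Y : Cc G} (f : hom X Y) {A B C : Lc G} (v : hom (F Y ⊗ A) B)
  (w : hom (F Y ⊗ A) C) :
  reindex f (pair (LP G) v w) = pair (LP G) (reindex f v) (reindex f w).
Proof. unfold reindex. apply comp_pair. Qed.

Lemma LScompE {P Q R : LSob G} (x : LShom P Q) (y : LShom Q R) :
  LScomp x y = (fst x >> fst y, fib_comp (snd x) (reindex (fst x) (snd y))).
Proof.
  unfold LScomp, fib_comp, reindex. f_equal.
  rewrite (tensm_splitl (fm F (fst x)) (snd x)). rassoc.
  arewrite (tensm_interchange _ _). reflexivity.
Qed.

Definition hom_of_eq {A A' : Lc G} (e : A = A') : hom A A' :=
  match e with eq_refl => idm A end.

Lemma hom_of_eqK {A A' : Lc G} (e : A = A') : hom_of_eq e >> hom_of_eq (eq_sym e) = idm _.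
Proof. destruct e. apply comp_idl. Qed.

Lemma hom_of_eqVK {A A' : Lc G} (e : A = A') : hom_of_eq (eq_sym e) >> hom_of_eq e = idm _.
Proof. destruct e. apply comp_idl. Qed.

Lemma castsrcE {X : Cc G} {A A' : Lc G} {Q : LSob G} (e : A = A') (x : LShom (X, A') Q) :
  castsrc e x = (fst x, (idm (F X) ⊗' hom_of_eq e) >> snd x).
Proof. destruct e, x. cbn. rewrite tensm_id, comp_idl. reflexivity. Qed.

(** * Derivatives *)

Definition inj1 (A B : Lc G) : hom A (A ⊕ B) := pair (LP G) (idm A) (zero LA A B).

Lemma inj1_pr1 (A B : Lc G) : inj1 A B >> pr1 (LP G) A B = idm _.
Proof. apply pair_pr1. Qed.

Lemma inj1_pr2 (A B : Lc G) : inj1 A B >> pr2 (LP G) A B = zero LA _ _.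
Proof. apply pair_pr2. Qed.

Lemma inj2_pr1 (A B : Lc G) : inj2 A B >> pr1 (LP G) A B = zero LA _ _.
Proof. apply pair_pr1. Qed.

Lemma inj2_pr2 (A B : Lc G) : inj2 A B >> pr2 (LP G) A B = idm _.
Proof. apply pair_pr2. Qed.

Definition phi_lin (X Y : Cc G) : hom (F (X × Y) ⊗ lam (X × Y)) (lam X ⊕ lam Y) :=
  pair (LP G) (D (pr1 (CP G) X Y)) (D (pr2 (CP G) X Y)).

Definition phii_lin (X Y : Cc G) : hom (F (X × Y) ⊗ (lam X ⊕ lam Y)) (lam (X × Y)) :=
  snd (phii T X Y).

(* The partial derivatives of [h : X × Y -> Z]: the derivative of [h] restricted, through
   the inverse of φ, to one summand of λ(X × Y) ≅ λX ⊕ λY. *)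
Definition partial1 {X Y Z : Cc G} (h : hom (X × Y) Z) : hom (F (X × Y) ⊗ lam X) (lam Z) :=
  (idm _ ⊗' inj1 _ _) >> fib_comp (phii_lin X Y) (D h).

Definition partial2 {X Y Z : Cc G} (h : hom (X × Y) Z) : hom (F (X × Y) ⊗ lam Y) (lam Z) :=
  (idm _ ⊗' inj2 _ _) >> fib_comp (phii_lin X Y) (D h).

Lemma Tm_id (X : Cc G) : D (idm X) = fib_id X (lam X).
Proof. exact (f_equal snd (T_id HT X)). Qed.

Lemma Tm_comp {X Y Z : Cc G} (f : hom X Y) (g : hom Y Z) :
  D (f >> g) = fib_comp (D f) (reindex f (D g)).
Proof. pose proof (f_equal snd (T_comp HT f g)) as H. rewrite LScompE in H. exact H. Qed.

Lemma phii_base (X Y : Cc G) : fst (phii T X Y) = idm _.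
Proof.
  pose proof (f_equal fst (phi_inv1 HT X Y)) as H. cbn in H.
  rewrite pair_pr, comp_idl in H. exact H.
Qed.

Lemma phi_phii (X Y : Cc G) : fib_comp (phi_lin X Y) (phii_lin X Y) = fib_id _ _.
Proof.
  pose proof (f_equal snd (phi_inv1 HT X Y)) as H. rewrite LScompE in H. cbn in H.
  rewrite pair_pr, reindex_id in H. exact H.
Qed.

Lemma phii_phi (X Y : Cc G) : fib_comp (phii_lin X Y) (phi_lin X Y) = fib_id _ _.
Proof.
  pose proof (f_equal snd (phi_inv2 HT X Y)) as H. rewrite LScompE, phii_base in H.
  cbn in H. rewrite reindex_id in H. exact H.
Qed.

Lemma phii_Tm_pr1 (X Y : Cc G) :
  fib_comp (phii_lin X Y) (D (pr1 (CP G) X Y)) = fib_id _ _ >> pr1 (LP G) _ _.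
Proof. rewrite <- phii_phi, fib_comp_post. unfold phi_lin. rewrite pair_pr1. reflexivity. Qed.

Lemma phii_Tm_pr2 (X Y : Cc G) :
  fib_comp (phii_lin X Y) (D (pr2 (CP G) X Y)) = fib_id _ _ >> pr2 (LP G) _ _.
Proof. rewrite <- phii_phi, fib_comp_post. unfold phi_lin. rewrite pair_pr2. reflexivity. Qed.

Lemma Tm_pair {Z X Y : Cc G} (f : hom Z X) (g : hom Z Y) :
  D (pair (CP G) f g)
  = fib_comp (pair (LP G) (D f) (D g)) (reindex (pair (CP G) f g) (phii_lin X Y)).
Proof.
  assert (E : fib_comp (D (pair (CP G) f g)) (reindex (pair (CP G) f g) (phi_lin X Y))
              = pair (LP G) (D f) (D g)).
  { unfold phi_lin. rewrite reindex_pair, fib_comp_pair, <- !Tm_comp, pair_pr1, pair_pr2.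
    reflexivity. }
  rewrite <- E, fib_compA, <- reindex_fib_comp, phi_phii, reindex_fib_id, fib_comp1r.
  reflexivity.
Qed.

Lemma Tm_pair_comp {Z X Y W : Cc G} (f : hom Z X) (g : hom Z Y) (h : hom (X × Y) W) :
  D (pair (CP G) f g >> h) =
  add LA (fib_comp (D f) (reindex (pair (CP G) f g) (partial1 h)))
         (fib_comp (D g) (reindex (pair (CP G) f g) (partial2 h))).
Proof.
  rewrite Tm_comp, Tm_pair, fib_compA, <- reindex_fib_comp, (pair_split (a := LA)).
  assert (E1 : pair (LP G) (D f) (zero LA _ (lam Y)) = D f >> inj1 _ _).
  { unfold inj1. rewrite comp_pair, comp_idr, comp_0r. reflexivity. }
  assert (E2 : pair (LP G) (zero LA _ (lam X)) (D g) = D g >> inj2 _ _).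
  { unfold inj2. rewrite comp_pair, comp_idr, comp_0r. reflexivity. }
  rewrite E1, E2, fib_compDl, !fib_comp_mid, !reindex_pre. reflexivity.
Qed.

Lemma partial2_comp {X Y Z W : Cc G} (h : hom (X × Y) Z) (k : hom Z W) :
  partial2 (h >> k) = fib_comp (partial2 h) (reindex h (D k)).
Proof. unfold partial2. rewrite Tm_comp, <- fib_compA, fib_comp_pre. reflexivity. Qed.

Lemma partial2_pr2 {X Y Z : Cc G} (k : hom Y Z) :
  partial2 (pr2 (CP G) X Y >> k) = reindex (pr2 (CP G) X Y) (D k).
Proof.
  rewrite partial2_comp. unfold partial2.
  rewrite phii_Tm_pr2, <- comp_assoc, fib_id_nat. rassoc.
  rewrite inj2_pr2, comp_idr, fib_comp1l. reflexivity.
Qed.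

Lemma partial1_swap {X Y Z : Cc G} (h : hom (X × Y) Z) :
  partial1 h = reindex (swapC (CP G) X Y) (partial2 (swapC (CP G) Y X >> h)).
Proof.
  rewrite partial2_comp. unfold partial2 at 1.
  assert (E : fib_comp (phii_lin Y X) (D (swapC (CP G) Y X)) =
              (idm _ ⊗' pair (LP G) (pr2 (LP G) _ _) (pr1 (LP G) _ _))
              >> reindex (swapC (CP G) Y X) (phii_lin X Y)).
  { unfold swapC at 1.
    rewrite Tm_pair, <- fib_compA, fib_comp_pair, phii_Tm_pr1, phii_Tm_pr2, <- comp_pair,
      fib_comp_linl.
    reflexivity. }
  rewrite E, <- comp_assoc, tensm_compr, comp_pair, inj2_pr2, inj2_pr1.
  change (pair (LP G) (idm (lam X)) (zero LA _ (lam Y))) with (inj1 (lam X) (lam Y)).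
  rewrite reindex_pre, <- reindex_fib_comp, <- reindex_comp, swapK, reindex_id, <- fib_comp_pre.
  reflexivity.
Qed.

(* Axiom (t.2) is an equality of objects; we transport along it by these mutually inverse
   arrows. *)
Definition lamU_in (A : Lc G) : hom A (lam (U A)) := hom_of_eq (eq_sym (lam_U HT A)).
Definition lamU_out (A : Lc G) : hom (lam (U A)) A := hom_of_eq (lam_U HT A).

Lemma lamU_inK (A : Lc G) : lamU_in A >> lamU_out A = idm _.
Proof. apply hom_of_eqVK. Qed.

Lemma lamU_outK (A : Lc G) : lamU_out A >> lamU_in A = idm _.
Proof. apply hom_of_eqK. Qed.

Lemma i2_fst (X Y : Cc G) : fst (i2 T X Y) = idm _.
Proof. unfold i2. rewrite LScompE, phii_base. apply comp_idl. Qed.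

Lemma i2_snd (X Y : Cc G) : snd (i2 T X Y) = (idm _ ⊗' inj2 _ _) >> phii_lin X Y.
Proof.
  unfold i2. rewrite LScompE. cbn [fst snd]. rewrite reindex_id. fold (phii_lin X Y).
  rewrite (tensm_splitl (wX (X × Y))). rassoc. rewrite lu_nat, <- comp_assoc.
  fold (fib_id (X × Y) (lam Y)). apply fib_comp_linl.
Qed.

(* The content of (t.3): in the second variable, [brace (id, u)] has derivative [u]. *)
Lemma partial2_brace {X : Cc G} {A B : Lc G} (u : hom (F X ⊗ A) B) :
  (idm (F (X × U A)) ⊗' lamU_in A)
  >> partial2 (prodm (CP G) (eta G X) (idm (U A)) >> nn G (F X) A >> fm U u)
  = (fm F (pr1 (CP G) X (U A)) ⊗' idm A) >> u >> lamU_in B.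
Proof.
  pose (x := (idm X, u) : LShom (X, A) (X, B)).
  pose proof (f_equal snd (t3 HT x)) as H.
  rewrite !LScompE, !castsrcE, (i2_fst X (U A)), (i2_snd X (U A)), (i2_snd X (U B)) in H.
  cbn [fst snd Wm TLS] in H. rewrite reindex_id in H. fold (lamU_in A) (lamU_in B) in H.
  assert (H' : (idm _ ⊗' lamU_in A) >> partial2 (brace x) =
               fib_comp ((fm F (pr1 (CP G) X (U A)) ⊗' idm A) >> u)
                 (reindex (brace x) ((idm _ ⊗' lamU_in B)
                                     >> ((idm _ ⊗' inj2 _ _) >> phii_lin X (U B))))).
  { unfold partial2. rewrite !fib_comp_pre. exact (eq_sym H). }
  assert (Eb : prodm (CP G) (eta G X) (idm (U A)) >> nn G (F X) A >> fm U u
               = brace x >> pr2 (CP G) _ _).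
  { unfold brace. rewrite pair_pr2. reflexivity. }
  rewrite Eb, partial2_comp, fib_comp_pre, H', fib_compA, <- reindex_fib_comp,
    <- !fib_comp_pre, phii_Tm_pr2.
  arewrite (fib_id_nat _). arewrite (inj2_pr2 _ _).
  rewrite comp_idr, fib_id_nat, reindex_lin, fib_comp_linr. rassoc. reflexivity.
Qed.

(** * The deriving transformation *)

Definition deriv {A B : Lc G} (g : hom (U A) (U B)) : hom (F (U A) ⊗ A) B :=
  (idm _ ⊗' lamU_in A) >> D g >> lamU_out B.

Definition dd (A : Lc G) : hom (F (U A) ⊗ A) (F (U A)) := deriv (eta G (U A)).

Lemma cast_fib_comp {X : Cc G} {A B C : Lc G} (u : hom (F X ⊗ lam (U A)) (lam (U B)))
  (v : hom (F X ⊗ lam (U B)) (lam (U C))) :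
  (idm _ ⊗' lamU_in A) >> fib_comp u v >> lamU_out C
  = fib_comp ((idm _ ⊗' lamU_in A) >> u >> lamU_out B)
             ((idm _ ⊗' lamU_in B) >> v >> lamU_out C).
Proof.
  rewrite fib_comp_pre, fib_comp_post, (fib_comp_mid ((idm (F X) ⊗' lamU_in A) >> u)).
  rassoc. arewrite (tensm_compr _ _). rewrite lamU_outK, tensm_id, comp_idl. reflexivity.
Qed.

Lemma deriv_comp {A B C : Lc G} (f : hom (U A) (U B)) (g : hom (U B) (U C)) :
  deriv (f >> g) = fib_comp (deriv f) (reindex f (deriv g)).
Proof.
  unfold deriv at 1. rewrite Tm_comp, cast_fib_comp, reindex_pre, reindex_post. reflexivity.
Qed.

Lemma deriv_id (A : Lc G) : deriv (idm (U A)) = fib_id (U A) A.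
Proof.
  unfold deriv. rewrite Tm_id. arewrite (fib_id_nat _). rewrite lamU_inK, comp_idr.
  reflexivity.
Qed.

Lemma strength_term_lin (A B : Lc G) (h : hom A B) :
  prodm (CP G) (eta G (term (CP G))) (idm (U A)) >> nn G (F (term (CP G))) A
  >> fm U (fib_id (term (CP G)) A >> h)
  = pr2 (CP G) _ _ >> fm U h.
Proof.
  rewrite <- (eta_mon1 HG).
  assert (E : prodm (CP G) (n1 G >> fm U (m1 G)) (idm (U A)) =
              prodm (CP G) (n1 G) (idm _) >> prodm (CP G) (fm U (m1 G)) (fm U (idm A))).
  { rewrite fm_id. unfold_cart. pair_simpl. reflexivity. }
  assert (E2 : (m1 G ⊗' idm A) >> fib_id (term (CP G)) A = lu LM A).
  { unfold fib_id, wX. arewrite (tensm_compl _ _).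
    rewrite (term_hom_eq (bang (CP G) (term (CP G))) (idm _)), fm_id, comp_idl,
      (m1_iso1 HG), tensm_id.
    apply comp_idl. }
  rewrite E. rassoc. arewrite (n_nat HG _ _). fold_fm. arewrite E2.
  rewrite <- comp_fm. arewrite (n_unitl HG _). reflexivity.
Qed.

(* A linear map is its own derivative: (t.3) at the terminal object. *)
Lemma deriv_U {A B : Lc G} (h : hom A B) : deriv (fm U h) = fib_id (U A) A >> h.
Proof.
  pose proof (partial2_brace (fib_id (term (CP G)) A >> h)) as H.
  rewrite strength_term_lin, partial2_pr2 in H.
  unfold deriv.
  transitivity ((idm _ ⊗' lamU_in A)
                >> reindex (pair (CP G) (bang (CP G) (U A)) (idm _))
                     (reindex (pr2 (CP G) _ _) (D (fm U h)))
                >> lamU_out B).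
  { rewrite <- reindex_comp, pair_pr2, reindex_id. reflexivity. }
  rewrite reindex_pre, reindex_post, H. rassoc. rewrite lamU_inK, comp_idr.
  change ((fm F (pr1 (CP G) _ (U A)) ⊗' idm A) >> (fib_id (term (CP G)) A >> h)) with
    (reindex (pr1 (CP G) (term (CP G)) (U A)) (fib_id (term (CP G)) A >> h)).
  rewrite <- reindex_comp, pair_pr1, reindex_lin. reflexivity.
Qed.

Lemma deriv_eta_nat {A B : Lc G} (f : hom (U A) (U B)) :
  fib_comp (deriv f) (reindex f (dd B))
  = fib_comp (dd A) (reindex (eta G (U A)) (deriv (fm U (fm F f)))).
Proof. unfold dd. rewrite <- !deriv_comp, (eta_nat HG). reflexivity. Qed.

Lemma dd_nat {A B : Lc G} (f : hom A B) :
  (fm F (fm U f) ⊗' f) >> dd B = dd A >> fm F (fm U f).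
Proof.
  pose proof (deriv_eta_nat (fm U f)) as H.
  rewrite !deriv_U, reindex_lin, fib_comp_linl, fib_comp_linr in H.
  unfold reindex in H. rewrite <- comp_assoc, tensm_unsplitr in H. exact H.
Qed.

Lemma dd_eps (A : Lc G) : dd A >> eps G A = (wX (U A) ⊗' idm A) >> lu LM A.
Proof.
  assert (E : deriv (eta G (U A) >> fm U (eps G A)) = deriv (idm _))
    by (rewrite (tri2 HG); reflexivity).
  rewrite deriv_comp, deriv_U, reindex_lin, fib_comp_linr, deriv_id in E. exact E.
Qed.

Lemma dd_p (A : Lc G) : dd A >> fm F (eta G (U A)) =
  (cX (U A) ⊗' idm A) >> asc LM _ _ _ >> (fm F (eta G (U A)) ⊗' dd A) >> dd (F (U A)).
Proof.
  pose proof (deriv_eta_nat (eta G (U A))) as H.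
  rewrite deriv_U, reindex_lin, fib_comp_linr in H.
  rewrite <- H. unfold fib_comp, reindex. rassoc. arewrite (tensm_unsplitr _ _). reflexivity.
Qed.

Lemma dd_w (A : Lc G) : dd A >> wX (U A) = zero LA _ _.
Proof.
  unfold wX.
  rewrite (term_hom_eq (bang (CP G) (U A)) (fm U (bang (LP G) A) >> bang (CP G) _)), fm_comp.
  rassoc. arewrite <- (dd_nat _).
  rewrite (term_hom_eq (bang (LP G) A) (zero LA _ _)), tens_0r, !comp_0l. reflexivity.
Qed.

(** * The Leibniz rule *)

Lemma Tm_U {A B : Lc G} (h : hom A B) :
  D (fm U h) = fib_id _ _ >> lamU_out A >> h >> lamU_in B.
Proof.
  transitivity ((idm _ ⊗' lamU_out A) >> deriv (fm U h) >> lamU_in B).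
  - unfold deriv. rassoc. rewrite lamU_outK, comp_idr. arewrite (tensm_compr _ _).
    rewrite lamU_outK, tensm_id, comp_idl. reflexivity.
  - rewrite deriv_U. rassoc. arewrite (fib_id_nat _). reflexivity.
Qed.

Lemma partial2_compU {X Y : Cc G} {B C : Lc G} (h : hom (X × Y) (U B)) (k : hom B C) :
  partial2 (h >> fm U k) = partial2 h >> lamU_out B >> k >> lamU_in C.
Proof. rewrite partial2_comp, Tm_U. rassoc. rewrite reindex_lin, fib_comp_linr. reflexivity. Qed.

Lemma n_eta_eps (B : Lc G) :
  prodm (CP G) (eta G (U B)) (idm (U B)) >> nn G (F (U B)) B >> fm U (eps G B ⊗' idm B)
  = nn G B B.
Proof.
  rewrite <- (fm_id U B). rassoc. arewrite <- (n_nat HG _ _). rewrite fm_id.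
  assert (E : prodm (CP G) (eta G (U B)) (idm (U B))
              >> prodm (CP G) (fm U (eps G B)) (idm (U B)) = idm _).
  { unfold_cart. pair_simpl. rewrite (tri2 HG), comp_idr. apply pair_pr. }
  arewrite E. apply comp_idl.
Qed.

Lemma partial2_n (B : Lc G) :
  (idm _ ⊗' lamU_in B) >> partial2 (nn G B B)
  = (fm F (pr1 (CP G) _ _) ⊗' idm B) >> (eps G B ⊗' idm B) >> lamU_in (B ⊗ B).
Proof. rewrite <- (n_eta_eps B), partial2_brace. rassoc. reflexivity. Qed.

(* c = F(Δ) ; m⁻¹ and η is monoidal, so the derivative of η ; U F Δ is that of a pairing
   (η, η) followed by n ; U(m): a sum of two partial derivatives of n, both given by (t.3). *)
Lemma dd_F_diag (A : Lc G) : dd A >> fm F (diagC (CP G) (U A)) =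
  add LA (fib_comp (dd A) (sym LM _ _ >> mm G _ _)) (fib_comp (dd A) (mm G _ _)).
Proof.
  assert (E1 : dd A >> fm F (diagC (CP G) (U A))
               = deriv (eta G (U A) >> fm U (fm F (diagC (CP G) (U A))))).
  { rewrite deriv_comp, deriv_U, reindex_lin, fib_comp_linr. reflexivity. }
  rewrite E1, <- (eta_nat HG), <- (eta_mon HG).
  assert (E2 : diagC (CP G) (U A)
               >> (prodm (CP G) (eta G (U A)) (eta G (U A)) >> nn G _ _ >> fm U (mm G _ _))
               = pair (CP G) (eta G (U A)) (eta G (U A))
                 >> (nn G _ _ >> fm U (mm G (U A) (U A)))).
  { unfold_cart. pair_simpl. reflexivity. }
  rewrite E2. unfold deriv at 1.
  rewrite Tm_pair_comp, comp_addr, comp_addl, !cast_fib_comp.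
  change ((idm _ ⊗' lamU_in A) >> D (eta G (U A)) >> lamU_out _) with (dd A).
  do 2 f_equal.
  - rewrite partial1_swap. arewrite <- (n_sym HG _ _). rewrite comp_fm, partial2_compU.
    unfold reindex. rassoc.
    arewrite (tensm_interchange _ _). arewrite (tensm_interchange _ _). arewrite (partial2_n _).
    arewrite (lamU_inK _). arewrite (lamU_inK _). rewrite comp_idr.
    arewrite (tensm_compl _ _). arewrite (tensm_compl _ _). arewrite (tensm_compl _ _).
    fold_fm. unfold swapC. pair_simpl. rewrite (tri1 HG), tensm_id, comp_idl. reflexivity.
  - rewrite partial2_compU. unfold reindex. rassoc.
    arewrite (tensm_interchange _ _). arewrite (partial2_n _).
    arewrite (lamU_inK _). arewrite (lamU_inK _). rewrite comp_idr.
    arewrite (tensm_compl _ _). arewrite (tensm_compl _ _).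
    fold_fm. pair_simpl. rewrite (tri1 HG), tensm_id, comp_idl. reflexivity.
Qed.

Lemma dd_c (A : Lc G) : dd A >> cA A =
  (cA A ⊗' idm A) >> asc LM _ _ _ >>
  add LA (idm (F (U A)) ⊗' dd A)
    ((idm (F (U A)) ⊗' sym LM (F (U A)) A) >> asci LM _ _ _ >> (dd A ⊗' idm (F (U A)))).
Proof.
  unfold cA, cX at 1.
  rewrite <- comp_assoc, dd_F_diag, comp_addl, !fib_comp_post. rassoc.
  rewrite (m_iso1 HG), comp_idr, !comp_addr. unfold fib_comp. rassoc. rewrite comp_idr.
  rewrite add_comm. f_equal.
  arewrite (sym_nat _ _ _). arewrite (asc_sym _ _ _). arewrite (tensm_compl _ _).
  rewrite c_comm. reflexivity.
Qed.

(** * The interchange rule *)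

Definition nabla (A : Lc G) : hom (F (U A) ⊗ F (U A)) (F (U A)) :=
  mm G (U A) (U A) >> fm F (uadd A).

Lemma nablaA (A : Lc G) :
  (nabla A ⊗' idm _) >> nabla A = asc LM _ _ _ >> (idm _ ⊗' nabla A) >> nabla A.
Proof.
  unfold nabla.
  rewrite <- (tensm_compl (mm G _ _) (fm F (uadd A))),
    <- (tensm_compr (mm G _ _) (fm F (uadd A))), <- (fm_id F (U A)).
  rassoc. arewrite (m_nat HG _ _). arewrite (m_nat HG _ _). rewrite !fm_id.
  arewrite <- (m_assoc HG _ _ _). fold_fm. rewrite uaddA. rassoc. reflexivity.
Qed.

Lemma nablaC (A : Lc G) : sym LM _ _ >> nabla A = nabla A.
Proof. unfold nabla. arewrite <- (m_sym HG _ _). fold_fm. rewrite uaddC. reflexivity. Qed.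

Lemma FU_add (A : Lc G) : fm F (fm U (add LA (pr1 (LP G) A A) (pr2 (LP G) A A))) =
  cX (U (A ⊕ A)) >> (fm F (fm U (pr1 (LP G) A A)) ⊗' fm F (fm U (pr2 (LP G) A A))) >> nabla A.
Proof.
  unfold cX, nabla. rassoc. arewrite (mmi_nat _ _). arewrite (m_iso2 HG _ _).
  rewrite comp_idl. fold_fm. f_equal.
  assert (E : diagC (CP G) (U (A ⊕ A))
              >> prodm (CP G) (fm U (pr1 (LP G) A A)) (fm U (pr2 (LP G) A A)) = uprod A A).
  { unfold uprod. unfold_cart. pair_simpl. reflexivity. }
  arewrite E. unfold uadd. arewrite (uprodK A A). rewrite comp_idl. reflexivity.
Qed.

Definition zero_pt (A : Lc G) : hom one (F (U A)) :=
  m1 G >> fm F term_U0 >> fm F (fm U (zero LA (term (LP G)) A)).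

Lemma FU_zero (A : Lc G) : fm F (fm U (zero LA A A)) = wX (U A) >> zero_pt A.
Proof.
  assert (Z : zero LA A A = bang (LP G) A >> zero LA _ A) by (rewrite comp_0r; reflexivity).
  assert (Z2 : fm U (bang (LP G) A) = bang (CP G) (U A) >> term_U0) by apply U_term_hom_eq.
  rewrite Z, fm_comp, Z2. unfold zero_pt, wX. rassoc.
  arewrite (m1_iso2 HG). rewrite comp_idl. fold_fm. reflexivity.
Qed.

Definition coder (A : Lc G) : hom A (F (U A)) := lui LM A >> (zero_pt A ⊗' idm A) >> dd A.

Lemma inj1_add_pr (A : Lc G) : inj1 A A >> add LA (pr1 (LP G) A A) (pr2 (LP G) A A) = idm _.
Proof. rewrite comp_addr, inj1_pr1, inj1_pr2. apply add_0r. Qed.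

Lemma inj2_add_pr (A : Lc G) : inj2 A A >> add LA (pr1 (LP G) A A) (pr2 (LP G) A A) = idm _.
Proof. rewrite comp_addr, inj2_pr1, inj2_pr2. apply add_0l. Qed.

Lemma sym_shuffle_nat {X : Cc G} {A A' : Lc G} (h : hom A' A) :
  (idm (F X) ⊗' h) >> (cX X ⊗' idm A) >> asc LM _ _ _ >> (idm (F X) ⊗' sym LM (F X) A)
  >> asci LM _ _ _
  = (cX X ⊗' idm A') >> asc LM _ _ _ >> (idm (F X) ⊗' sym LM (F X) A') >> asci LM _ _ _
    >> ((idm (F X) ⊗' h) ⊗' idm (F X)).
Proof.
  rassoc. arewrite (tensm_interchange _ _). arewrite (asc_natr _).
  arewrite (tensm_compr _ _). rewrite sym_nat, <- tensm_compr. rassoc.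
  arewrite (asci_nat (idm _) _ (idm _)). reflexivity.
Qed.

(* Split A along the codiagonal A ⊕ A -> A and apply the Leibniz rule: the term
   differentiating the first copy vanishes, the other is (1 ⊗ coder) ; ∇. *)
Lemma dd_nabla (A : Lc G) : dd A = (idm _ ⊗' coder A) >> nabla A.
Proof.
  set (sum := add LA (pr1 (LP G) A A) (pr2 (LP G) A A)).
  assert (Split : dd A = (fm F (fm U (inj1 A A)) ⊗' inj2 A A) >> dd (A ⊕ A)
                         >> fm F (fm U sum)).
  { rassoc. arewrite <- (dd_nat _). arewrite <- (tensm_comp _ _ _ _ _). fold_fm.
    rewrite inj1_add_pr, inj2_add_pr, !fm_id, tensm_id, comp_idl. reflexivity. }
  rewrite Split, FU_add. rassoc. arewrite (dd_c (A ⊕ A)). unfold cA.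
  rewrite comp_addl. rassoc. rewrite !comp_addr.
  rewrite <- (add_0r (a := LA) ((idm _ ⊗' coder A) >> nabla A)). f_equal.
  - rewrite (chain_rw2 (tensm_postl (fm F (fm U (inj1 A A))) (inj2 A A) (cX (U (A ⊕ A))))).
    rewrite cX_nat, <- tensm_prel. rassoc.
    arewrite (asc_nat _ _ _ _). arewrite (tensm_postr _ _ _).
    arewrite <- (tensm_comp _ _ _ _ _). arewrite <- (dd_nat _).
    arewrite <- (tensm_comp _ _ _ _ _). fold_fm.
    rewrite inj1_pr1, inj1_pr2, inj2_pr2, !fm_id, FU_zero.
    assert (I : ((wX (U A) >> zero_pt A) ⊗' idm A) >> dd A = fib_id (U A) A >> coder A).
    { unfold fib_id, coder. rewrite <- tensm_compl. rassoc.
      arewrite (lu_iso1 LM _). rewrite comp_idl. reflexivity. }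
    rewrite I, <- (fib_comp_linl (coder A) (nabla A)). unfold fib_comp. rassoc. reflexivity.
  - rewrite (tensm_splitl (fm F (fm U (inj1 A A))) (inj2 A A)). rassoc.
    arewrite (sym_shuffle_nat _). arewrite (tensm_compl (idm _ ⊗' inj2 A A) (dd (A ⊕ A))).
    rewrite (chain_rw2 (tensm_prel (fm F (fm U (pr1 (LP G) A A)))
                          (fm F (fm U (pr2 (LP G) A A))) ((idm _ ⊗' inj2 A A) >> dd (A ⊕ A)))).
    rassoc. arewrite <- (dd_nat _). arewrite (tensm_prer _ _ _).
    rewrite inj2_pr1, tens_0r, comp_0l, tens_0l, !comp_0l, !comp_0r. reflexivity.
Qed.

Lemma dd_interchange (A : Lc G) :
  asc LM _ _ _ >> (idm (F (U A)) ⊗' sym LM A A) >> asci LM _ _ _ >> (dd A ⊗' idm A) >> dd A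
  = (dd A ⊗' idm A) >> dd A.
Proof.
  rewrite (dd_nabla A).
  assert (R : (((idm _ ⊗' coder A) >> nabla A) ⊗' idm A) >> ((idm _ ⊗' coder A) >> nabla A)
              = asc LM _ _ _ >> (idm _ ⊗' (coder A ⊗' coder A)) >> (idm _ ⊗' nabla A)
                >> nabla A).
  { rewrite <- tensm_compl. rassoc. arewrite <- (tensm_interchange _ _).
    arewrite (nablaA A). arewrite (tensm_unsplitl _ _). arewrite (asc_nat _ _ _ _).
    reflexivity. }
  arewrite R. arewrite (asc_iso2 _ _ _ _). rewrite comp_idl.
  arewrite (tensm_compr _ _). arewrite (tensm_compr _ _).
  arewrite <- (sym_nat _ (coder A) (coder A)). rewrite nablaC, <- tensm_compr. rassoc.
  reflexivity.
Qed.
End GDSC.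

Theorem corollary4p40 (G : LNLdata) (T : GDSCdata G)
  (HG : LNLax G) (HT : GDSCax T) : DiffSeely G.
Proof.
  split; [exact (fun A => tri1 HG _)|].
  split; [exact (pp_FU_eps HG)|].
  split; [exact (pp_coassoc HG)|].
  split; [exact (seely_iso HG)|].
  split; [exact (seely_iso0 HG)|].
  exists (dd HT).
  split; [exact (fun A B f => dd_nat HG HT f)|].
  split; [exact (dd_w HG HT)|].
  split; [exact (dd_c HG HT)|].
  split; [exact (dd_eps HG HT)|].
  split; [exact (dd_p HG HT)|].
  exact (dd_interchange HG HT).
Qed.
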